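(* Let $\Delta\ge 2$ be an integer. Every graph $G$ on $n\ge 1$ vertices with maximum degree $\Delta(G)\le\Delta$ has bandwidth \[ \mathrm{bw}(G)\le \frac{6n}{\log_{\Delta}(n/s(G))}. \]
   Context: The bandwidth $\mathrm{bw}(G)$ of a graph $G=(V,E)$ on $n$ vertices is the minimum positive integer $b$ such that there is a labelling of $V$ by the numbers $1,\dots,n$ (bijectively) in which the labels of any two adjacent vertices differ by at most $b$. For a real $\tfrac12\le\alpha<1$ and $s\in\mathbb N$, a set $S\subseteq V$ is an $(s,\alpha)$-separator of $G$ if there are $A,B\subseteq V$ with $V=A\,\dot\cup\, B\,\dot\cup\, S$ (disjoint union), $|S|\le s$, $|A|,|B|\le\alpha|V|$, and no edge of $G$ has one endpoint in $A$ and the other in $B$. The separation number $s(G)$ is the smallest $s$ such that every subgraph $G'$ of $G$ has an $(s,2/3)$-separator. (One always has $1\le s(G)\le n$; if $s(G)=n$ the right-hand side is read as $+\infty$.) *)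

From Stdlib Require Import Reals.
From mathcomp Require Import all_boot.
Set Implicit Arguments. Unset Strict Implicit. Unset Printing Implicit Defensive.

Definition simple_graph (T : finType) (e : rel T) : Prop :=
  symmetric e /\ irreflexive e.

Definition maxdeg_le (T : finType) (e : rel T) (D : nat) : Prop :=
  forall v : T, #|[set u | e v u]| <= D.

(* A labelling of V by 0..n-1 (a shift of 1..n), bijective (injective between
   sets of equal size n = #|T|), such that adjacent labels differ by <= b. *)
Definition bw_ok (T : finType) (e : rel T) (b : nat) : bool :=
  (0 < b) &&
  [exists f : {ffun T -> 'I_#|T|},
     injectiveb f &&
     [forall u, forall v, e u v ==> ((f u - f v <= b) && (f v - f u <= b))]].

Lemma bw_exists (T : finType) (e : rel T) : exists b, bw_ok e b.
Proof.
exists #|T|.+1; apply/andP; split => //.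
apply/existsP; exists [ffun x => enum_rank x]; apply/andP; split.
  by apply/injectiveP => x y; rewrite !ffunE => /enum_rank_inj.
apply/forallP => u; apply/forallP => v; apply/implyP => _; rewrite !ffunE.
apply/andP; split; apply: leq_trans (leq_subr _ _) _;
  by apply: ltnW; rewrite ltnS ltnW.
Qed.

Definition bandwidth (T : finType) (e : rel T) : nat := ex_minn (bw_exists e).

Definition is_subgraph (T : finType) (e : rel T) (V' : {set T})
    (E' : {set T * T}) : bool :=
  [forall u, forall v,
     (((u, v) \in E') ==> [&& e u v, u \in V' & v \in V']) &&
     (((u, v) \in E') == ((v, u) \in E'))].

Definition has_sep23 (T : finType) (V' : {set T}) (E' : {set T * T})
    (s : nat) : bool :=
  [exists S : {set T}, exists A : {set T}, exists B : {set T},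
     [&& A :|: B :|: S == V',
         [disjoint A & B], [disjoint A & S], [disjoint B & S],
         #|S| <= s,
         3 * #|A| <= 2 * #|V'|, 3 * #|B| <= 2 * #|V'| &
         [forall a in A, forall b in B, (a, b) \notin E']]].

Definition sep_ok (T : finType) (e : rel T) (s : nat) : bool :=
  [forall V' : {set T}, forall E' : {set T * T},
     is_subgraph e V' E' ==> has_sep23 V' E' s].

Lemma sep_exists (T : finType) (e : rel T) : exists s, sep_ok e s.
Proof.
exists #|T|; apply/forallP => V'; apply/forallP => E'; apply/implyP => _.
apply/existsP; exists V'; apply/existsP; exists set0; apply/existsP; exists set0.
rewrite !set0U eqxx -!setI_eq0 !set0I eqxx max_card /= !cards0 muln0 /=.
by apply/forallP => a; rewrite in_set0.
Qed.

Definition sepnum (T : finType) (e : rel T) : nat := ex_minn (sep_exists e).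

From Stdlib Require Import Reals Lra.
From mathcomp Require Import all_boot zify.
Set Implicit Arguments. Unset Strict Implicit. Unset Printing Implicit Defensive.

(* Let n = #|T|, s = s(G) and let j be maximal with s D^j <= n, so that
   log_D (n / s) < j + 1; it suffices to label G with bandwidth b such that
   (j + 1) b <= 6 n.  For j <= 5 any labelling works, and for j <= 7 it suffices
   to put a single separator between the two sides it separates.  For j >= 8,
   separate G recursively into pieces of about n / (j - 3) vertices, at the
   cost of a set X of O(s j) separator vertices, and pack the pieces into
   2 (j / 4) bins of about n / (2 (j / 4)) vertices, laid out on both sides of
   X by increasing bin index.  A vertex that is closer to X than the index of
   its bin is moved to the layer of vertices at its distance from X; a layer at
   distance t has at most D^t |X| vertices, and now every edge spans at most one
   bin, one piece and two consecutive layers. *)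

Lemma bandwidth_le (T : finType) (e : rel T) b : bw_ok e b -> bandwidth e <= b.
Proof. by rewrite /bandwidth; case: ex_minnP => m _; apply. Qed.

Section KeyLabelling.
Variables (T : finType) (k : T -> nat).

Definition key_prec (u v : T) : bool :=
  (k u < k v) || ((k u == k v) && (enum_rank u < enum_rank v)).

Definition key_rank (v : T) : nat := #|[set u | key_prec u v]|.

Lemma key_prec_irr u : key_prec u u = false.
Proof. by rewrite /key_prec ltnn eqxx ltnn. Qed.

Lemma key_prec_trans u v w : key_prec u v -> key_prec v w -> key_prec u w.
Proof.
rewrite /key_prec => /orP[uv|/andP[/eqP-> uv]] /orP[vw|/andP[/eqP vw vw']].
- by rewrite (ltn_trans uv vw).
- by rewrite -vw uv.
- by rewrite vw.
- by rewrite vw eqxx (ltn_trans uv vw') orbT.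
Qed.

Lemma key_prec_total u v : u != v -> key_prec u v || key_prec v u.
Proof.
move=> neq_uv; rewrite /key_prec.
case: (ltngtP (k u) (k v)) => //= _.
case: (ltngtP (enum_rank u) (enum_rank v)) => //= /ord_inj/enum_rank_inj eq_uv.
by rewrite eq_uv eqxx in neq_uv.
Qed.

Lemma key_prec_le u v : key_prec u v -> k u <= k v.
Proof. by case/orP=> [/ltnW|/andP[/eqP-> _]]. Qed.

Lemma key_rank_lt_card v : key_rank v < #|T|.
Proof.
rewrite /key_rank -cardsT; apply/proper_card/properP; split; first exact: subsetT.
by exists v; rewrite !inE ?key_prec_irr.
Qed.

Lemma key_rank_lt u v : key_prec u v -> key_rank u < key_rank v.
Proof.
move=> uv; apply: proper_card; apply/properP; split.
  by apply/subsetP => w; rewrite !inE => /key_prec_trans; apply.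
by exists u; rewrite !inE ?uv ?key_prec_irr.
Qed.

Lemma key_rank_inj : injective key_rank.
Proof.
move=> u v eq_uv; apply/eqP; apply: contraT => /key_prec_total.
by case/orP=> /key_rank_lt; rewrite eq_uv ltnn.
Qed.

Lemma key_rank_sub_lt u v : key_prec u v ->
  key_rank v - key_rank u < #|[set w | k u <= k w <= k v]|.
Proof.
move=> uv.
have sub_uv : [set w | key_prec w u] \subset [set w | key_prec w v].
  by apply/subsetP => w; rewrite !inE => /key_prec_trans; apply.
rewrite /key_rank (cardsD1 v [set w | _ <= k w <= _]) inE (key_prec_le uv) leqnn.
rewrite add1n ltnS -(setIidPr sub_uv) -cardsD subset_leq_card //.
apply/subsetP => w; rewrite !inE => /andP[wu wv].
rewrite (key_prec_le wv) andbT; apply/andP; split.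
  by apply: contraTneq wv => ->; rewrite key_prec_irr.
by rewrite leqNgt; apply: contra wu => lt_wu; rewrite /key_prec lt_wu.
Qed.

Lemma bandwidth_le_key_windows (e : rel T) b : 0 < b ->
  (forall u v, e u v ->
     #|[set w | minn (k u) (k v) <= k w <= maxn (k u) (k v)]| <= b.+1) ->
  bandwidth e <= b.
Proof.
move=> b_gt0 window; apply: bandwidth_le; rewrite /bw_ok b_gt0.
apply/existsP; exists [ffun v => Ordinal (key_rank_lt_card v)]; apply/andP; split.
  by apply/injectiveP => u v; rewrite !ffunE => /(congr1 val)/key_rank_inj.
apply/forallP => u; apply/forallP => v; apply/implyP => /window; rewrite !ffunE /=.
wlog vu : u v / key_prec v u.
  move=> gen win; case: (eqVneq u v) => [->|neq_uv]; first by rewrite subnn.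
  case/orP: (key_prec_total neq_uv) => [uv|vu]; last exact: gen vu win.
  by rewrite andbC; apply: gen uv _; rewrite minnC maxnC.
rewrite (minn_idPr (key_prec_le vu)) (maxn_idPl (key_prec_le vu)) => win.
move: (ltnW (key_rank_lt vu)); rewrite -subn_eq0 => /eqP->; rewrite andbT.
by rewrite -ltnS (leq_trans (key_rank_sub_lt vu)).
Qed.

End KeyLabelling.

Section DistanceLayers.
Variables (T : finType) (e : rel T) (D : nat).
Hypothesis deg_le : maxdeg_le e D.

Definition nbhd (Y : {set T}) : {set T} := [set w | [exists u in Y, e u w]].

Lemma nbhdP (Y : {set T}) w : reflect (exists2 u, u \in Y & e u w) (w \in nbhd Y).
Proof.
rewrite inE; apply: (iffP existsP) => [[u /andP[]]|[u Yu euw]]; exists u => //.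
by rewrite Yu.
Qed.

Lemma card_nbhd (Y : {set T}) : #|nbhd Y| <= D * #|Y|.
Proof.
have -> : nbhd Y = \bigcup_(u in Y) [set w | e u w].
  apply/setP => w; apply/nbhdP/bigcupP => -[u Yu euw];
    by exists u; rewrite ?inE in euw *.
rewrite mulnC -sum_nat_const; elim/big_rec2: _ => [|u n U _ le_Un]; first by rewrite cards0.
by rewrite (leq_trans (leq_card_setU _ _)) // leq_add.
Qed.

Variable X : {set T}.

Definition ball (t : nat) : {set T} := iter t (fun Y => Y :|: nbhd Y) X.

(* [setdist v] is the distance from [X] to [v], or [#|T|.+1] if [v] is not
   reachable from [X]. *)
Definition setdist (v : T) : nat := find (fun t => v \in ball t) (iota 0 #|T|.+1).

Lemma setdist_le v : setdist v <= #|T|.+1.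
Proof. by rewrite -[X in _ <= X](size_iota 0) find_size. Qed.

Lemma setdist_ball v : setdist v <= #|T| -> v \in ball (setdist v).
Proof.
move=> le_v; have : has (fun t => v \in ball t) (iota 0 #|T|.+1).
  by rewrite has_find size_iota.
by move/(nth_find 0); rewrite nth_iota.
Qed.

Lemma setdist_notin_ball v t : t < setdist v -> v \notin ball t.
Proof.
move=> lt_t; have := before_find 0 lt_t.
by rewrite nth_iota ?add0n ?(leq_trans lt_t (setdist_le v)) // => ->.
Qed.

Lemma setdist_min v t : v \in ball t -> setdist v <= t.
Proof. by move=> vt; rewrite leqNgt; apply/negP => /setdist_notin_ball; rewrite vt. Qed.

Lemma setdist_eq0 v : (setdist v == 0) = (v \in X).
Proof. by rewrite /setdist /=; case: ifP. Qed.

Lemma setdist_edge u v : e u v -> setdist v <= (setdist u).+1.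
Proof.
move=> euv; case: (ltnP (setdist u) #|T|) => [lt_u|le_u]; last first.
  by rewrite (leq_trans (setdist_le v)).
apply: setdist_min; rewrite /= inE; apply/orP; right.
by apply/nbhdP; exists u => //; apply/setdist_ball/ltnW.
Qed.

Lemma setdist_layer_sub t : t < #|T| ->
  [set v | setdist v == t.+1] \subset nbhd [set v | setdist v == t].
Proof.
move=> lt_t; apply/subsetP => v; rewrite inE => /eqP dv.
have := setdist_ball (v := v); rewrite dv => /(_ lt_t) /=; rewrite inE.
case/orP=> [vt|/nbhdP[u ut euv]].
  by have := @setdist_notin_ball v t; rewrite dv ltnSn vt => /(_ isT).
apply/nbhdP; exists u => //; rewrite inE eqn_leq setdist_min //=.
by rewrite -ltnS -dv setdist_edge.
Qed.

Lemma card_setdist_layer t :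
  t <= #|T| -> #|[set v | setdist v == t]| <= D ^ t * #|X|.
Proof.
elim: t => [_|t IH lt_t].
  by rewrite expn0 mul1n subset_leq_card //; apply/subsetP => v; rewrite !inE setdist_eq0.
rewrite (leq_trans (subset_leq_card (setdist_layer_sub lt_t))) //.
by rewrite (leq_trans (card_nbhd _)) // expnS -mulnA leq_mul2l IH ?orbT // ltnW.
Qed.

End DistanceLayers.

(* At most [D ^ t * #|X|] vertices lie at distance [t] from [X]; only the
   distances below [h] will matter. *)
Definition layer_bound (T : finType) (D h : nat) (X : {set T}) (t : nat) : nat :=
  if t < h then D ^ t * #|X| else 0.

Lemma layer_bound_pair (T : finType) D h (X : {set T}) t : 1 < h -> 0 < D ->
  layer_bound D h X t + layer_bound D h X t.+1 <= #|X| * D ^ (h - 2) * D.+1.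
Proof.
move=> h_gt1 D_gt0; have DhE : D ^ (h - 2) * D.+1 = D ^ (h - 2) + D ^ h.-1.
  by rewrite mulnSr addnC -expnSr; congr (_ + D ^ _); lia.
rewrite -mulnA mulnC DhE /layer_bound.
have le_exp k l : k <= l -> D ^ k <= D ^ l by move=> ?; rewrite leq_pexp2l.
case: ltnP => [lt_th|]; case: ltnP => [lt_Sth|] //; rewrite ?addn0 -?mulnDl.
- by rewrite leq_mul2r leq_add ?le_exp ?orbT //; lia.
- by rewrite leq_mul2r (leq_trans _ (leq_addl _ _)) ?le_exp ?orbT //; lia.
- lia.
Qed.

Section TwoSidedLayout.
Variables (T : finType) (e : rel T) (D : nat).
Hypothesis e_sym : symmetric e.
Hypothesis deg_le : maxdeg_le e D.
Variables (X : {set T}) (side : T -> bool) (level : T -> nat) (h L : nat).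
Hypothesis level_range : forall v, v \notin X -> 0 < level v <= h.
Hypothesis edge_side_level : forall u v, u \notin X -> v \notin X -> e u v ->
  side u = side v /\ level u = level v.
Hypothesis card_level : forall b t,
  #|[set v | (v \notin X) && (side v == b) && (level v == t)]| <= L.
Hypothesis h_range : 0 < h <= #|T|.

Local Notation d := (setdist e X).

(* The vertices of [X] sit in the middle, the two sides to its left and right. *)
Definition offset (v : T) : nat :=
  if v \in X then 0 else if d v < level v then (d v).*2 else (level v).*2.-1.

Definition layout_key (v : T) : nat :=
  if side v then h.*2 + offset v else h.*2 - offset v.

Local Notation layer_bound := (layer_bound D h X).

Lemma setdist_gt0 v : v \notin X -> 0 < d v.
Proof. by rewrite lt0n setdist_eq0. Qed.

Lemma offset_eq0 v : (offset v == 0) = (v \in X).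
Proof.
rewrite /offset; case: ifP => // /negbT vX.
by have := setdist_gt0 vX; have := level_range vX; case: ifP; lia.
Qed.

Lemma offset_le v : offset v <= h.*2.
Proof.
rewrite /offset; case: ifP => // /negbT vX.
by have := level_range vX; case: ifP; lia.
Qed.

Lemma edge_window u v : e u v -> exists b t,
  [/\ t.*2 <= offset u <= t.*2.+2, t.*2 <= offset v <= t.*2.+2,
      (offset u == 0) || (side u == b) & (offset v == 0) || (side v == b)].
Proof.
move=> euv; have dvu := setdist_edge X euv.
rewrite e_sym in euv; have duv := setdist_edge X euv.
rewrite !offset_eq0 /offset.
have d0 w : w \in X -> d w = 0 by rewrite -(setdist_eq0 e) => /eqP.
case: (boolP (u \in X)) => uX; case: (boolP (v \in X)) => vX.
- by exists true, 0.
- exists (side v), 0; rewrite eqxx orbT; move: (d0 _ uX) (setdist_gt0 vX) (level_range vX).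
  by case: ifP; split => //; lia.
- exists (side u), 0; rewrite eqxx orbT; move: (d0 _ vX) (setdist_gt0 uX) (level_range uX).
  by case: ifP; split => //; lia.
- rewrite e_sym in euv; have [-> ->] := edge_side_level uX vX euv.
  exists (side v); rewrite eqxx orbT; have := level_range vX.
  case: ifP => lt_u; case: ifP => lt_v.
  + by exists (minn (d u) (d v)); split => //; lia.
  all: by exists (level v).-1; split => //; lia.
Qed.

Lemma window_sub b t u v :
  t.*2 <= offset u <= t.*2.+2 -> t.*2 <= offset v <= t.*2.+2 ->
  (offset u == 0) || (side u == b) -> (offset v == 0) || (side v == b) ->
  [set w | minn (layout_key u) (layout_key v) <= layout_key w
             <= maxn (layout_key u) (layout_key v)] \subset
  [set w | (offset w == t.*2) && ((offset w == 0) || (side w == b))] :|: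
  [set w | (offset w == t.*2.+1) && (side w == b)] :|:
  [set w | (offset w == t.*2.+2) && (side w == b)].
Proof.
move=> ou ov su sv; apply/subsetP => w; rewrite !inE /layout_key.
move: (offset_le u) (offset_le v) (offset_le w) su sv.
by case: (side u); case: (side v); case: (side w); case: b => /=;
  rewrite ?orbF ?orbT ?eqxx ?andbT; lia.
Qed.

Lemma card_offset_even b t :
  #|[set w | (offset w == t.*2) && ((offset w == 0) || (side w == b))]|
    <= layer_bound t.
Proof.
rewrite /layer_bound; case: ifP => [lt_th|ge_th]; last first.
  rewrite leqn0 cards_eq0; apply/eqP/setP => w; rewrite !inE; apply/negbTE.
  apply/negP => /andP[/eqP]; rewrite /offset.
  case: ifP => [_ /eqP|/negbT wX]; first by lia.
  by have := level_range wX; case: ifP; lia.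
have le_tT : t <= #|T| by case/andP: h_range => _; apply: leq_trans; apply: ltnW.
apply: leq_trans (card_setdist_layer deg_le X le_tT); apply: subset_leq_card.
apply/subsetP => w; rewrite !inE => /andP[/eqP]; rewrite /offset.
case: ifP => [wX|/negbT wX].
  by case: t {lt_th le_tT} => // _ _; rewrite setdist_eq0.
by have := level_range wX; case: ifP; lia.
Qed.

Lemma card_offset_odd b t :
  #|[set w | (offset w == t.*2.+1) && (side w == b)]| <= L.
Proof.
apply: leq_trans (card_level b t.+1); apply: subset_leq_card; apply/subsetP => w.
rewrite !inE => /andP[+ ->]; rewrite /offset andbT; case: ifP => //= /negbT wX.
by have := level_range wX; case: ifP; lia.
Qed.

Lemma bandwidth_le_two_sided bw : 0 < bw ->
  (forall t, L + layer_bound t + layer_bound t.+1 <= bw.+1) -> bandwidth e <= bw.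
Proof.
move=> bw_gt0 bound; apply: (bandwidth_le_key_windows (k := layout_key)) => // u v euv.
have [b [t [ou ov su sv]]] := edge_window euv.
apply: leq_trans (subset_leq_card (window_sub ou ov su sv)) _.
apply: leq_trans (bound t); apply: leq_trans (leq_card_setU _ _) _.
apply: leq_add.
  apply: leq_trans (leq_card_setU _ _) _.
  by rewrite addnC leq_add ?card_offset_odd ?card_offset_even.
apply: leq_trans (card_offset_even b t.+1); apply: subset_leq_card.
by apply/subsetP => w; rewrite !inE doubleS => /andP[-> ->]; rewrite orbT.
Qed.

End TwoSidedLayout.

Section SeparatorDecomposition.
Variables (T : finType) (e : rel T).
Hypothesis e_sym : symmetric e.

Definition induced_sep (s : nat) (U : {set T}) : Prop :=
  exists S A B : {set T}, [/\ A :|: B :|: S = U, [disjoint A & B], #|S| <= s,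
    3 * #|A| <= 2 * #|U| /\ 3 * #|B| <= 2 * #|U| &
    forall x y, x \in A -> y \in B -> ~~ e x y].

Lemma sepnum_induced_sep U : induced_sep (sepnum e) U.
Proof.
set E := [set p | [&& e p.1 p.2, p.1 \in U & p.2 \in U]].
have subE : is_subgraph e U E.
  apply/forallP => u; apply/forallP => v; rewrite !inE /= e_sym.
  by rewrite implybb [(u \in U) && _]andbC eqxx.
have : sep_ok e (sepnum e) by rewrite /sepnum; case: ex_minnP.
move=> /forallP/(_ U)/forallP/(_ E)/implyP/(_ subE)/existsP[S /existsP[A /existsP[B]]].
case/and5P=> /eqP UE AB _ _ /and4P[Ss As Bs /forall_inP noedge].
exists S, A, B; split => // x y xA yB.
have /forall_inP/(_ y yB) := noedge x xA; rewrite !inE /= -UE !inE xA yB orbT /=.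
by rewrite !andbT.
Qed.

Lemma induced_sep_edge (S A B U : {set T}) u v :
  A :|: B :|: S = U -> [disjoint A & B] -> (forall x y, x \in A -> y \in B -> ~~ e x y) ->
  u \in U :\: S -> v \in U :\: S -> e u v -> (u \in A) = (v \in A).
Proof.
move=> UE AB noedge; rewrite -UE !inE => /andP[/negbTE uS uAB] /andP[/negbTE vS vAB] euv.
rewrite uS vS !orbF in uAB vAB; apply/idP/idP => [uA|vA].
  by case/orP: vAB => // vB; have := noedge u v uA vB; rewrite euv.
by case/orP: uAB => // uB; have := noedge v u vA uB; rewrite e_sym euv.
Qed.

Definition piece_colouring (m : nat) (U X : {set T}) (col : T -> nat) : Prop :=
  [/\ X \subset U,
      forall u v, u \in U :\: X -> v \in U :\: X -> e u v -> col u = col v &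
      forall c, #|[set v in U :\: X | col v == c]| <= m].

Lemma piece_colouring_small m (U : {set T}) :
  #|U| <= m -> piece_colouring m U set0 (fun=> 0).
Proof.
move=> le_Um; split=> [|//|c]; first exact: sub0set.
rewrite (leq_trans _ le_Um) // subset_leq_card //.
by apply/subsetP => v; rewrite !inE => /andP[].
Qed.

Lemma piece_colouring_join m (U S A B XA XB : {set T}) colA colB :
  A :|: B :|: S = U -> [disjoint A & B] -> (forall x y, x \in A -> y \in B -> ~~ e x y) ->
  piece_colouring m A XA colA -> piece_colouring m B XB colB ->
  piece_colouring m U (S :|: XA :|: XB)
    (fun v => if v \in A then (colA v).*2 else (colB v).*2.+1).
Proof.
move=> UE AB noedge [XA_A edgeA cardA] [XB_B edgeB cardB].
have inB v : v \in U :\: S -> v \notin A -> v \in B.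
  by rewrite -UE !inE => /andP[/negbTE-> /=]; rewrite orbF => /orP[->|].
split.
- have [SU AU BU] : [/\ S \subset U, A \subset U & B \subset U].
    by rewrite -UE subsetUr -setUA subsetUl setUA setUAC subsetUr.
  by rewrite !subUset SU (subset_trans XA_A AU) (subset_trans XB_B BU).
- move=> u v; rewrite !inE !negb_or -!andbA.
  move=> /and4P[uS uXA uXB uU] /and4P[vS vXA vXB vU] euv.
  have uUS : u \in U :\: S by rewrite inE uS.
  have vUS : v \in U :\: S by rewrite inE vS.
  have sideE := induced_sep_edge UE AB noedge uUS vUS euv.
  rewrite -sideE; case: ifP => [uA|/negbT uA].
    by rewrite (edgeA u v) // !inE ?uXA ?vXA -?sideE.
  by rewrite (edgeB u v) // !inE ?uXB ?vXB ?inB // -?sideE.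
- move=> c; case/boolP: (odd c) => [odd_c|even_c].
    apply: leq_trans (cardB c./2); apply: subset_leq_card; apply/subsetP => v.
    rewrite !inE !negb_or -!andbA => /and5P[vS vXA vXB vU].
    case: ifP => [_ /eqP cE|/negbT vA /eqP cE].
      by rewrite -cE odd_double in odd_c.
    have vB : v \in B by apply: inB; rewrite // inE vS.
    by rewrite vXB vB -cE /= uphalf_double eqxx.
  apply: leq_trans (cardA c./2); apply: subset_leq_card; apply/subsetP => v.
  rewrite !inE !negb_or -!andbA => /and5P[vS vXA vXB vU].
  case: ifP => [_ /eqP cE|_ /eqP cE]; last by rewrite -cE /= odd_double in even_c.
  by rewrite vXA -cE doubleK eqxx.
Qed.

Variables (s m : nat).
Hypothesis sep : forall U, induced_sep s U.
Hypothesis m_gt0 : 0 < m.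

(* Splitting [N > m] vertices costs [s] vertices and leaves two parts of at most
   [2N/3] vertices; the bound [3 s N - s m] is preserved by this recursion. *)
Definition sep_budget (N : nat) : nat := if N <= m then 0 else 3 * s * N - s * m.

Lemma sep_budget_split N NA NB : m < N -> 3 * NA <= 2 * N -> 3 * NB <= 2 * N ->
  NA + NB <= N -> m * s + sep_budget NA + sep_budget NB <= sep_budget N.
Proof. by rewrite /sep_budget; move=> + + + +; case: leqP; case: ifP; case: ifP; nia. Qed.

Lemma separator_decomposition U :
  exists X col, piece_colouring m U X col /\ m * #|X| <= sep_budget #|U|.
Proof.
have [N] := ubnP #|U|; elim: N U => // N IH U /ltnSE le_UN.
case: (leqP #|U| m) => [le_Um|lt_mU].
  by exists set0, (fun=> 0); split; [exact: piece_colouring_small|rewrite cards0 muln0].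
have [S [A [B [UE AB Ss [As Bs] noedge]]]] := sep U.
have [XA [colA [pcA costA]]] := IH A ltac:(lia).
have [XB [colB [pcB costB]]] := IH B ltac:(lia).
exists (S :|: XA :|: XB), (fun v => if v \in A then (colA v).*2 else (colB v).*2.+1).
split; first exact: piece_colouring_join UE AB noedge pcA pcB.
have le_AB : #|A| + #|B| <= #|U|.
  have /eqP AB0 : A :&: B == set0 by rewrite setI_eq0.
  by rewrite -cardsUI AB0 cards0 addn0 -UE subset_leq_card ?subsetUl.
apply: leq_trans (sep_budget_split lt_mU As Bs le_AB).
have cardX : #|S :|: XA :|: XB| <= #|S| + #|XA| + #|XB|.
  by apply: leq_trans (leq_card_setU _ _) _; rewrite leq_add2r leq_card_setU.
rewrite (leq_trans (leq_mul (leqnn m) cardX)) // !mulnDr !leq_add //.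
by rewrite leq_mul2l Ss orbT.
Qed.

End SeparatorDecomposition.

Section Bins.
Variables (T : finType) (X : {set T}) (col : T -> nat) (m W : nat).
Hypothesis card_colour : forall c, #|[set v in ~: X | col v == c]| <= m.
Hypothesis W_gt0 : 0 < W.

(* The vertices outside [X] are listed colour class by colour class and the
   list is cut into bins of [W] consecutive vertices. *)
Definition colour_rank (v : T) : nat := #|[set w in ~: X | col w < col v]|.

Definition bin (v : T) : nat := colour_rank v %/ W.

Lemma bin_lt k v : #|T| <= k * W -> bin v < k.
Proof.
move=> le_T; rewrite /bin ltn_divLR // (leq_trans _ le_T) //.
rewrite /colour_rank -cardsT; apply/proper_card/properP; split; first exact: subsetT.
by exists v; rewrite !inE ?ltnn ?andbF.
Qed.

Lemma colour_rank_sub u v : col u <= col v -> colour_rank v - colour_rank u =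
  #|[set w in ~: X | col w < col v] :\: [set w in ~: X | col w < col u]|.
Proof.
move=> le_uv; rewrite cardsD (setIidPr _) //.
by apply/subsetP => w; rewrite !inE => /andP[-> /leq_trans]; apply.
Qed.

Lemma card_bin j : #|[set v in ~: X | bin v == j]| < W + m.
Proof.
set Bj := [set v in ~: X | bin v == j].
have [->|[v0 Bv0]] := set_0Vmem Bj; first by rewrite cards0 addn_gt0 W_gt0.
case: (arg_maxnP col Bv0) => vh Bvh max_vh.
case: (arg_minnP col Bv0) => vl Bvl min_vl.
have sub : Bj \subset
    ([set w in ~: X | col w < col vh] :\: [set w in ~: X | col w < col vl]) :|:
    [set w in ~: X | col w == col vh].
  apply/subsetP => w Bw; have := max_vh w Bw; have := min_vl w Bw.
  move: Bw; rewrite !inE => /andP[-> _] /= le_lw le_wh.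
  by rewrite -leqNgt le_lw /= ltn_neqAle le_wh andbT orNb.
have same_bin : bin vh = bin vl.
  move: (Bvh : vh \in Bj) (Bvl : vl \in Bj); rewrite !inE.
  by move=> /andP[_ /eqP->] /andP[_ /eqP->].
have lt_W : colour_rank vh - colour_rank vl < W.
  move: same_bin; rewrite /bin => same_bin.
  have := ltn_ceil (colour_rank vh) W_gt0; have := leq_divM (colour_rank vl) W.
  rewrite same_bin; lia.
apply: leq_ltn_trans (subset_leq_card sub) _; apply: leq_ltn_trans (leq_card_setU _ _) _.
by rewrite -colour_rank_sub ?min_vl // -addSn leq_add.
Qed.

End Bins.

Lemma sq_le_exp2 k : 11 <= k -> 16 * (k * k) <= 2 ^ k.
Proof.
elim: k => // k IH; rewrite leq_eqVlt => /orP[/eqP <- //|k_ge11].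
have := IH k_ge11.
have : k.+1 * k.+1 <= 2 * (k * k) by nia.
by rewrite expnS; lia.
Qed.

Lemma exp2_mulS_le k D : 0 < k -> 2 <= D -> 2 ^ k * D.+1 <= 3 * D ^ k.
Proof.
move=> + D_ge2; elim: k => // -[_ _|k IH _]; first by rewrite !expn1; lia.
rewrite expnS (expnS D) -mulnA.
apply: leq_trans (_ : 2 * (3 * D ^ k.+1) <= _); first by rewrite leq_mul2l IH.
by rewrite mulnCA leq_mul2l leq_mul2r D_ge2 !orbT.
Qed.

Lemma layout_cost_le j n A B x Z :
  8 <= j -> (j %/ 4).*2 * A <= n -> (j - 3) * B <= n -> x <= 3 * (j - 3) * Z ->
  2 ^ (j - j %/ 4 + 2) * Z <= 3 * n -> j.+1 * (A + B + x) <= 6 * n.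
Proof.
move=> j_ge8 le_A le_B le_x le_Z.
have [j_le11|j_gt11] := leqP j 11.
  have hE : j %/ 4 = 2 by lia.
  rewrite hE (_ : j - 2 + 2 = j) in le_A le_Z; last by lia.
  have : j \in [:: 8; 9; 10; 11] by rewrite !inE; lia.
  by rewrite !inE => /or4P[] /eqP jE; move: le_A le_B le_x le_Z; rewrite jE; lia.
(* For j >= 12: (j + 1) / (2 (j / 4)) <= 8/3, (j + 1) / (j - 3) <= 13/9 and
   9 (j + 1) (j - 3) <= 2 ^ k. *)
set k := j - j %/ 4 + 2 in le_Z.
have /sq_le_exp2 sq_le : 11 <= k by lia.
have A_le : 3 * (j.+1 * A) <= 8 * n.
  rewrite mulnA (leq_trans (leq_mul (_ : _ <= 8 * (j %/ 4).*2) (leqnn A))) //; first by lia.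
  by rewrite -mulnA leq_mul2l le_A orbT.
have B_le : 9 * (j.+1 * B) <= 13 * n.
  rewrite mulnA (leq_trans (leq_mul (_ : _ <= 13 * (j - 3)) (leqnn B))) //; first by lia.
  by rewrite -mulnA leq_mul2l le_B orbT.
have jk_le : 9 * (j.+1 * (j - 3)) <= 2 ^ k.
  have le_jk : 3 * j.+1 <= 4 * k /\ 3 * (j - 3) <= 4 * k by lia.
  by apply: leq_trans sq_le; have := leq_mul le_jk.1 le_jk.2; lia.
have x_le : 3 * (j.+1 * x) <= 3 * n.
  apply: leq_trans le_Z; apply: leq_trans (_ : 3 * (j.+1 * (3 * (j - 3) * Z)) <= _).
    by rewrite leq_mul2l leq_mul2l le_x !orbT.
  by have := leq_mul jk_le (leqnn Z); lia.
lia.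
Qed.

Lemma bandwidth_le_card (T : finType) (e : rel T) : 0 < #|T| -> bandwidth e <= #|T|.
Proof.
move=> T_gt0; apply: bandwidth_le; rewrite /bw_ok T_gt0.
apply/existsP; exists [ffun v => enum_rank v]; apply/andP; split.
  by apply/injectiveP => u v; rewrite !ffunE => /enum_rank_inj.
apply/forallP => u; apply/forallP => v; apply/implyP => _; rewrite !ffunE.
by rewrite !(leq_trans (leq_subr _ _)) // ltnW.
Qed.

Section BoundedDegree.
Variables (T : finType) (e : rel T) (D : nat).
Hypothesis e_sym : symmetric e.
Hypothesis deg_le : maxdeg_le e D.

Local Notation n := #|T|.
Local Notation s := (sepnum e).

Lemma sepnum_gt0 : 0 < n -> 0 < s.
Proof.
case/card_gt0P => v _.
have [S [A [B [UE _ Ss [As Bs] _]]]] := sepnum_induced_sep e_sym [set v].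
rewrite cards1 in As Bs.
have /eqP A0 : A == set0 by rewrite -cards_eq0; lia.
have /eqP B0 : B == set0 by rewrite -cards_eq0; lia.
move: UE; rewrite A0 B0 !set0U => SE.
by rewrite (leq_trans _ Ss) // SE cards1.
Qed.

Lemma bandwidth_le_three_quarters : 0 < n -> 64 * s <= n -> 4 * bandwidth e <= 3 * n.
Proof.
move=> n_gt0 le_s.
have [S [A [B [UE AB Ss [As Bs] noedge]]]] := sepnum_induced_sep e_sym [set: T].
rewrite cardsT in As Bs.
have SAE u : u \notin S -> (u \in A) || (u \in B).
  by move=> uS; move: (in_setT u); rewrite -UE !inE (negbTE uS) orbF.
set L := maxn #|A| #|B|.
have bw_le : bandwidth e <= (L + #|S|).+1.
  apply: (@bandwidth_le_two_sided _ e D e_sym deg_le S [in A] (fun=> 1) 1 L) => //.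
  - move=> u v uS vS euv; split => //.
    by rewrite (induced_sep_edge e_sym UE AB noedge _ _ euv) // !inE ?uS ?vS.
  - move=> b t; apply: (@leq_trans #|if b then A else B|); last first.
      by case: b; rewrite ?leq_maxl ?leq_maxr.
    apply: subset_leq_card; apply/subsetP => w.
    rewrite !inE => /andP[/andP[wS /eqP<-] _].
    by case: (boolP (w \in A)) => //= wA; move: (SAE w wS); rewrite (negbTE wA).
  - by case=> [|t]; rewrite /layer_bound /= ?expn0 ?mul1n ?addn0 ?leqnSn //; lia.
have L_le : 3 * L <= 2 * n by rewrite /L maxnMr geq_max As Bs.
have s_gt0 := sepnum_gt0 n_gt0.
by clear -bw_le L_le Ss le_s s_gt0; lia.
Qed.

Hypothesis D_gt1 : 1 < D.

Lemma bandwidth_le_binned h m W :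
  1 < h -> 0 < m -> 1 < W -> h <= n -> n <= h.*2 * W ->
  exists2 X : {set T}, m * #|X| <= 3 * s * n &
    bandwidth e <= W.-1 + m.-1 + #|X| * D ^ (h - 2) * D.+1.
Proof.
move=> h_gt1 m_gt0 W_gt1 h_le n_le.
have [X [col [[_ edge_col card_col] cost]]] :=
  separator_decomposition e_sym (@sepnum_induced_sep _ _ e_sym) m_gt0 [set: T].
exists X.
  by rewrite (leq_trans cost) // /sep_budget cardsT; case: ifP => // _; apply: leq_subr.
rewrite setTD in card_col.
have W_gt0 : 0 < W by apply: ltnW.
have bin_lt v : bin X col W v < h.*2 by apply: bin_lt.
pose side v := bin X col W v < h.
pose level v := if side v then (bin X col W v).+1 else (bin X col W v - h).+1.
apply: (@bandwidth_le_two_sided _ e D e_sym deg_le X side level h (W + m).-1).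
- by move=> v _; rewrite /level /side; have := bin_lt v; case: ifP; lia.
- move=> u v uX vX euv.
  by rewrite /level /side /bin /colour_rank (edge_col u v) ?inE ?uX ?vX.
- move=> b t; rewrite -ltnS prednK ?addn_gt0 ?W_gt0 //.
  apply: leq_ltn_trans (card_bin card_col W_gt0 (if b then t.-1 else t.-1 + h)).
  apply: subset_leq_card; apply/subsetP => w; rewrite !inE /level /side.
  by case/andP=> /andP[-> /eqP<-] /eqP<-; case: ifP; case: ifP; lia.
- by apply/andP; split; [apply: ltnW|].
- by rewrite addn_gt0 addn_gt0 -subn1 subn_gt0 W_gt1.
- by move=> t; have := layer_bound_pair X t h_gt1 (ltnW D_gt1); lia.
Qed.

Lemma bandwidth_le_large_ratio j : 0 < n -> 8 <= j -> s * D ^ j <= n ->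
  j.+1 * bandwidth e <= 6 * n.
Proof.
move=> n_gt0 j_ge8 le_n; have s_gt0 := sepnum_gt0 n_gt0.
set h := j %/ 4; set M := j - 3; set m := (n %/ M).+1; set W := (n %/ h.*2).+1.
have exp_le : 2 ^ j <= n.
  have le_exp : 2 ^ j <= D ^ j by rewrite leq_exp2r //; lia.
  by rewrite (leq_trans le_exp) // (leq_trans _ le_n) // leq_pmull.
have lt_jn : j < n by apply: leq_trans exp_le; apply: ltn_expl.
have [h_gt1 M_gt0] : 1 < h /\ 0 < M by rewrite /h /M; lia.
have W_gt1 : 1 < W by rewrite ltnS divn_gt0 ?double_gt0; lia.
have n_le : n <= h.*2 * W by rewrite mulnC ltnW // ltn_ceil // double_gt0; lia.
have [X cost bw_le] := @bandwidth_le_binned h m W h_gt1 isT W_gt1 ltac:(lia) n_le.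
have X_le : #|X| <= 3 * s * M.
  rewrite -(leq_pmul2l (isT : 0 < m)) (leq_trans cost) // mulnCA leq_mul2l.
  by rewrite mulnC ltnW ?orbT // ltn_ceil.
have Z_le : 2 ^ (j - h + 2) * (s * D ^ (h - 2) * D.+1) <= 3 * n.
  have jE : j = h - 2 + (j - h + 2) by lia.
  rewrite jE expnD in le_n.
  apply: leq_trans (_ : s * D ^ (h - 2) * (3 * D ^ (j - h + 2)) <= _).
    by rewrite mulnCA leq_mul2l exp2_mulS_le ?orbT //; lia.
  by move: le_n; lia.
rewrite (leq_trans (leq_mul (leqnn _) bw_le)) //.
apply: (layout_cost_le (Z := s * D ^ (h - 2) * D.+1)) => //.
- by rewrite /= mulnC leq_divM.
- by rewrite /= mulnC leq_divM.
- by have := leq_mul (leq_mul X_le (leqnn (D ^ (h - 2)))) (leqnn D.+1); lia.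
Qed.

Lemma bandwidth_mul_log_le : 0 < n -> s < n ->
  exists2 j, n < s * D ^ j.+1 & j.+1 * bandwidth e <= 6 * n.
Proof.
move=> n_gt0 lt_sn; have s_gt0 := sepnum_gt0 n_gt0.
have quot_gt0 : 0 < n %/ s by rewrite divn_gt0 // ltnW.
set j := trunc_log D (n %/ s).
exists j; first by rewrite mulnC -ltn_divLR // trunc_log_ltn.
have le_n : s * D ^ j <= n by rewrite mulnC -leq_divRL // trunc_logP.
have [j_le5|j_gt5] := leqP j 5.
  rewrite (leq_trans (leq_mul (leqnn _) (bandwidth_le_card e n_gt0))) //.
  by rewrite leq_mul2r ltnS j_le5 orbT.
have [j_le7|j_gt7] := leqP j 7; last exact: bandwidth_le_large_ratio.
have : 4 * bandwidth e <= 3 * n.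
  apply: bandwidth_le_three_quarters n_gt0 (leq_trans _ le_n).
  rewrite mulnC leq_mul2l (@leq_trans (D ^ 6)) ?orbT ?leq_pexp2l ?(ltnW D_gt1) //.
  by rewrite -[64]/(2 ^ 6) leq_exp2r.
have le_j8 : j.+1 <= 8 by rewrite ltnS.
by move=> le_bw; apply: leq_trans (leq_mul le_j8 (leqnn _)) _; lia.
Qed.

End BoundedDegree.

Section RealBound.
Local Open Scope R_scope.

Lemma INR_expn (D k : nat) : INR (D ^ k)%N = INR D ^ k.
Proof. by elim: k => // k IH; rewrite expnS mult_INR IH. Qed.

Lemma le_div_log_ratio (b j n s D : nat) :
  (1 < D)%N -> (0 < s)%N -> (s < n)%N -> (n < s * D ^ j.+1)%N -> (j.+1 * b <= 6 * n)%N ->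
  INR b <= INR 6 * INR n / (ln (INR n / INR s) / ln (INR D)).
Proof.
move=> /ltP D_gt1 /ltP s_gt0 /ltP lt_sn /ltP lt_n /leP le_b.
have Rs : 0 < INR s by apply: lt_0_INR.
have RD : 1 < INR D by apply: (lt_INR 1).
have Rn : INR n < INR s * INR D ^ j.+1 by rewrite -INR_expn -mult_INR; apply: lt_INR.
have Rb : INR j.+1 * INR b <= INR 6 * INR n by rewrite -!mult_INR; apply: le_INR.
have ratio_gt1 : 1 < INR n / INR s.
  apply: (Rmult_lt_reg_r (INR s)) => //.
  have := lt_INR _ _ lt_sn; rewrite /Rdiv Rmult_assoc Rinv_l; lra.
have ratio_lt : INR n / INR s < INR D ^ j.+1.
  apply: (Rmult_lt_reg_r (INR s)) => //.
  by rewrite /Rdiv Rmult_assoc Rinv_l; lra.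
have lnD_gt0 : 0 < ln (INR D) by rewrite -ln_1; apply: ln_increasing; lra.
have log_gt0 : 0 < ln (INR n / INR s) / ln (INR D).
  by apply: Rdiv_lt_0_compat => //; rewrite -ln_1; apply: ln_increasing; lra.
have log_lt : ln (INR n / INR s) / ln (INR D) < INR j.+1.
  apply: (Rmult_lt_reg_r (ln (INR D))) => //.
  rewrite /Rdiv Rmult_assoc Rinv_l; last lra.
  by rewrite Rmult_1_r -ln_pow; [apply: ln_increasing|]; lra.
apply: (Rmult_le_reg_r _ _ _ log_gt0).
rewrite /Rdiv Rmult_assoc Rinv_l ?Rmult_1_r; last lra.
have := pos_INR b; nra.
Qed.

End RealBound.

Theorem theorem5 (D : nat) (T : finType) (e : rel T) :
  (2 <= D)%N ->
  simple_graph e ->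
  (1 <= #|T|)%N ->
  maxdeg_le e D ->
  (sepnum e < #|T|)%N ->
  Rle (INR (bandwidth e))
      (Rdiv (Rmult (INR 6) (INR #|T|))
            (Rdiv (ln (Rdiv (INR #|T|) (INR (sepnum e)))) (ln (INR D)))).
Proof.
move=> D_ge2 [e_sym _] n_gt0 deg_le lt_sn.
have [j lt_n bw_le] := bandwidth_mul_log_le e_sym deg_le D_ge2 n_gt0 lt_sn.
exact: le_div_log_ratio D_ge2 (sepnum_gt0 e_sym n_gt0) lt_sn lt_n bw_le.
Qed.
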